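(* Let $f\in\mathbb{R}[\mathbf{x}]$, $\mathscr{A}=\operatorname{supp}(f)$, let $\mathscr{B}\subseteq\mathbb{N}^n$ be a finite set of exponents, and let $f^s_{\mathrm{ts}}$ denote the optimal value of $$\mathbf{P}^s_{\mathrm{ts}}:\quad\inf_{\mathbf{y}}\{L_{\mathbf{y}}(f):\ \mathbf{B}_{G^{(s)}}\circ\mathbf{M}_{\mathscr{B}}(\mathbf{y})\in\Pi_{G^{(s)}}(\mathbb{S}^+_{|\mathscr{B}|}),\ y_{\mathbf{0}}=1\},\qquad s\ge1,$$ and $f_{\mathrm{mom}}$ the optimal value of $\inf_{\mathbf{y}}\{L_{\mathbf{y}}(f):\mathbf{M}_{\mathscr{B}}(\mathbf{y})\succeq0,\ y_{\mathbf{0}}=1\}$. Then the sequence $(f^s_{\mathrm{ts}})_{s\ge1}$ is monotonically nondecreasing and $f^s_{\mathrm{ts}}\le f_{\mathrm{mom}}$ for all $s\ge1$.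
   Context: A graph is chordal if every cycle of length at least four has a chord; a chordal extension $G'$ of $G$ is a chordal graph on the same nodes containing all edges of $G$. For each graph $G$ a chordal extension $G'$ is fixed so that $G\subseteq H$ (inclusion of node and edge sets) implies $G'\subseteq H'$. For a graph $G$ with node set $V\subseteq\mathbb{N}^n$, $\operatorname{supp}(G)=\{\beta+\gamma:\beta=\gamma\in V\text{ or }\{\beta,\gamma\}\in E(G)\}$. $G^{\mathrm{tsp}}$ has nodes $\mathscr{B}$ and edges $\{\beta,\gamma\}$, $\beta\ne\gamma$, with $\beta+\gamma\in\mathscr{A}\cup2\mathscr{B}$. $G^{(0)}=G^{\mathrm{tsp}}$; for $s\ge1$, $F^{(s)}$ has nodes $\mathscr{B}$ and edges $\{\beta,\gamma\}$, $\beta\ne\gamma$, with $\beta+\gamma\in\operatorname{supp}(G^{(s-1)})$, and $G^{(s)}=(F^{(s)})'$. $L_{\mathbf{y}}(\sum f_\alpha\mathbf{x}^\alpha)=\sum f_\alpha y_\alpha$; $\mathbf{M}_{\mathscr{B}}(\mathbf{y})$ is indexed by $\mathscr{B}$ with $(\beta,\gamma)$-entry $y_{\beta+\gamma}$. For a graph $G$ on nodes $V$: $\mathbb{S}(G)$ is the set of symmetric matrices indexed by $V$ vanishing at $(\beta,\gamma)$ whenever $\beta\ne\gamma$ and $\{\beta,\gamma\}\notin E(G)$; $\Pi_G$ zeroes the off-pattern entries; $\Pi_G(\mathbb{S}^+_{|V|})=\{\Pi_G(\mathbf{Q}):\mathbf{Q}\succeq0\}$; $\mathbf{B}_G$ is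 the adjacency matrix of $G$ with unit diagonal; $\circ$ is the entrywise product. *)

From HB Require Import structures.
From mathcomp Require Import all_boot all_order all_algebra finmap.
From mathcomp Require Import all_classical all_reals all_analysis.
From mathcomp Require mpoly.
Import (canonicals) mpoly.

Set Implicit Arguments.
Unset Strict Implicit.
Unset Printing Implicit Defensive.

Import Order.TTheory GRing.Theory Num.Theory.
Local Open Scope ring_scope.
Local Open Scope fset_scope.

(* exponents alpha in N^n are the monomials 'X_{1..n} of multinomials *)
Notation expo n := (mpoly.multinom n).
Definition eadd n (a b : expo n) : expo n := mpoly.mnm_add a b.
Definition ezero n : expo n := mpoly.mnm0.

Section Graphs.
Variable V : finType.

Definition is_graph (E : rel V) : Prop := symmetric E /\ irreflexive E.

Definition subgraph (G H : rel V) : Prop := forall x y, G x y -> H x y.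

Definition chordal (E : rel V) : Prop :=
  forall c : seq V, uniq c -> (3 < size c)%N -> cycle E c ->
    exists x y, [/\ x \in c, y \in c, x != y, E x y &
                    (y != next c x) && (x != next c y)].

Definition chordal_ext_op (ext : rel V -> rel V) : Prop :=
  forall G, is_graph G ->
    [/\ is_graph (ext G), chordal (ext G), subgraph G (ext G) &
        forall H, is_graph H -> subgraph G H -> subgraph (ext G) (ext H)].
End Graphs.

Section TSSOS.
Variables (R : realType) (n : nat).
Variable B : {fset expo n}.

Definition supp_graph (G : rel B) (a : expo n) : bool :=
  [exists b : B, exists c : B, ((b == c) || G b c) && (eadd (val b) (val c) == a)].

Definition G_tsp (f : mpoly.mpoly n R) : rel B := fun b c =>
  (b != c) && ((eadd (val b) (val c) \in mpoly.msupp f) ||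
               [exists d : B, eadd (val b) (val c) == eadd (val d) (val d)]).

Definition F_of (G : rel B) : rel B := fun b c =>
  (b != c) && supp_graph G (eadd (val b) (val c)).

Fixpoint G_seq (ext : rel B -> rel B) (f : mpoly.mpoly n R) (s : nat) : rel B :=
  if s is s'.+1 then ext (F_of (G_seq ext f s')) else G_tsp f.

Definition Ly (y : expo n -> R) (f : mpoly.mpoly n R) : R :=
  \sum_(a <- mpoly.msupp f) mpoly.mcoeff a f * y a.

Definition mom_mx (y : expo n -> R) : B -> B -> R :=
  fun b c => y (eadd (val b) (val c)).

Definition psd (Q : B -> B -> R) : Prop :=
  (forall i j, Q i j = Q j i) /\
  (forall v : B -> R, 0 <= \sum_i \sum_j v i * Q i j * v j).

Definition adj_mx (G : rel B) : B -> B -> R :=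
  fun b c => if (b == c) || G b c then 1 else 0.

Definition proj_mx (G : rel B) (Q : B -> B -> R) : B -> B -> R :=
  fun b c => if (b == c) || G b c then Q b c else 0.

Definition hadamard (P Q : B -> B -> R) : B -> B -> R := fun b c => P b c * Q b c.

Definition in_proj_psd (G : rel B) (M : B -> B -> R) : Prop :=
  exists Q, psd Q /\ forall b c, M b c = proj_mx G Q b c.

Definition f_ts (ext : rel B -> rel B) (f : mpoly.mpoly n R) (s : nat) : \bar R :=
  ereal_inf [set (Ly y f)%:E | y in
    [set y : expo n -> R |
       in_proj_psd (G_seq ext f s) (hadamard (adj_mx (G_seq ext f s)) (mom_mx y))
       /\ y (ezero n) = 1]].

Definition f_mom (f : mpoly.mpoly n R) : \bar R :=
  ereal_inf [set (Ly y f)%:E | y in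
    [set y : expo n -> R | psd (mom_mx y) /\ y (ezero n) = 1]].
End TSSOS.

(** Both claims follow from one observation: if [G] is a subgraph of [H], then
    every [y] feasible for the relaxation built on [H] is feasible for the one
    built on [G], since a PSD completion of the [H]-pattern of [M_B(y)] is also
    a PSD completion of its coarser [G]-pattern.  The graphs [G^(s)] increase
    with [s] because [F(G) ⊇ G] for irreflexive [G] and [F ⊆ F'], and the dense
    moment matrix is its own completion for every pattern. *)
From Pilot Require Import Defs.
From HB Require Import structures.
From mathcomp Require Import all_boot all_order all_algebra finmap.
From mathcomp Require Import all_classical all_reals all_analysis.
From mathcomp Require mpoly.
Import (canonicals) mpoly.

Import GRing.Theory.
Local Open Scope ring_scope.

Lemma eaddC (n : nat) (a b : expo n) : eadd a b = eadd b a.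
Proof. exact: mpoly.addmC. Qed.

Section Relaxations.
Variables (R : realType) (n : nat) (B : {fset expo n}).

Lemma F_of_graph (G : rel B) : is_graph (F_of G).
Proof.
split=> [b c | b]; last by rewrite /F_of eqxx.
by rewrite /F_of eq_sym eaddC.
Qed.

Lemma subgraph_F_of {G : rel B} : irreflexive G -> subgraph G (F_of G).
Proof.
move=> irrG b c Gbc; apply/andP; split.
  by apply: contraTneq Gbc => ->; rewrite irrG.
by apply/existsP; exists b; apply/existsP; exists c; rewrite Gbc orbT eqxx.
Qed.

Lemma in_proj_psd_subgraph {G H : rel B} (M : B -> B -> R) :
  subgraph G H -> in_proj_psd H (hadamard (adj_mx R H) M) ->
  in_proj_psd G (hadamard (adj_mx R G) M).
Proof.
move=> sGH [Q [psdQ HQ]]; exists Q; split=> // b c; move: (HQ b c).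
rewrite /hadamard /adj_mx /Defs.proj_mx.
have [/orP GHbc | _] := boolP ((b == c) || G b c); last by rewrite mul0r.
have -> : (b == c) || H b c by case: GHbc => [-> | /sGH ->]; rewrite ?orbT.
by rewrite mul1r.
Qed.

Lemma psd_in_proj_psd (G : rel B) (M : B -> B -> R) :
  psd M -> in_proj_psd G (hadamard (adj_mx R G) M).
Proof.
move=> psdM; exists M; split=> // b c.
by rewrite /hadamard /adj_mx /Defs.proj_mx; case: ifP; rewrite ?mul1r ?mul0r.
Qed.

Variables (ext : rel B -> rel B) (f : mpoly.mpoly n R).
Hypothesis ext_chordal : chordal_ext_op ext.

Lemma G_seq_irreflexive (s : nat) : irreflexive (G_seq ext f s).
Proof.
case: s => [b | s]; first by rewrite /= /G_tsp eqxx.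
by have [[_ +] _ _ _] := ext_chordal _ (F_of_graph (G_seq ext f s)).
Qed.

Lemma G_seq_subgraphS (s : nat) : subgraph (G_seq ext f s) (G_seq ext f s.+1).
Proof.
have [_ _ sub_ext _] := ext_chordal _ (F_of_graph (G_seq ext f s)).
by move=> b c /(subgraph_F_of (G_seq_irreflexive s)) /sub_ext.
Qed.

Lemma f_ts_nondecreasing (s : nat) : (f_ts ext f s <= f_ts ext f s.+1)%E.
Proof.
apply: le_ereal_inf => _ [y [feas_y y0] <-]; exists y => //; split=> //.
exact: in_proj_psd_subgraph (G_seq_subgraphS s) feas_y.
Qed.

End Relaxations.

Lemma f_ts_le_f_mom (R : realType) (n : nat) (B : {fset expo n})
    (ext : rel B -> rel B) (f : mpoly.mpoly n R) (s : nat) :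
  (f_ts ext f s <= f_mom B f)%E.
Proof.
apply: le_ereal_inf => _ [y [psd_y y0] <-]; exists y => //; split=> //.
exact: psd_in_proj_psd.
Qed.

Theorem theorem7p2 (R : realType) (n : nat) (f : mpoly.mpoly n R)
    (B : {fset expo n}) (ext : rel B -> rel B) :
  chordal_ext_op ext ->
  (forall s : nat, (1 <= s)%N -> (f_ts ext f s <= f_ts ext f s.+1)%E) /\
  (forall s : nat, (1 <= s)%N -> (f_ts ext f s <= f_mom B f)%E).
Proof.
move=> ext_chordal; split=> s _; first exact: f_ts_nondecreasing.
exact: f_ts_le_f_mom.
Qed.
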